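(* Let $(S,|\cdot|)$ be a finite metric space with $n$ points, let $t\ge1$ be a real number, and let $G'=(S,E')$ be a $t$-spanner for $S$ with $m$ edges. Then for any integer $f$ with $1\le f\le (n-1)/2$, the graph $G=(S,E)$ obtained from $G'$ by the construction in the context is an $f$-faulty-degree $((8f+2)t)$-spanner for $S$ that has at most $(4f-1)m$ edges.
   Context: For a finite metric space $(S,|\cdot|)$, $K_S$ denotes the complete graph on $S$ in which each edge $\{p,q\}$ has weight $|pq|$. All graphs on vertex set $S$ considered have edge weights $|pq|$. For an edge-weighted graph $X$ and vertices $p,q$, $\delta_X(p,q)$ is the length of a shortest path between $p$ and $q$ in $X$ ($+\infty$ if none exists). For a set $F$ of edges, $X\setminus F$ is the graph with the same vertex set as $X$ and edge set $E_X\setminus F$. A graph $G'=(S,E')$ is a $t$-spanner for $S$ if $\delta_{G'}(p,q)\le t|pq|$ for all $p,q\in S$. For an integer $f\ge 0$ and real $t\ge1$, a graph $G=(S,E)$ is an $f$-faulty-degree $t$-spanner for $S$ if for every subset $F\subseteq E$ such that the graph $(S,F)$ has maximum degree at most $f$, and for all $p,q\in S$, $\delta_{G\setminus F}(p,q)\le t\cdot\delta_{K_S\setminus F}(p,q)$. Construction: Let $G'=(S,E')$ be a $t$-spanner for $S$, $n=|S|$, and let $f$ be an integer with $1\le f\le (n-1)/2$. For each edge $\{a,b\}\in E'$, list the points of $S\setminus\{a,b\}$ as $c_1,\dots,c_{n-2}$ in non-decreasing order of $|ac_i|+|c_ib|$ (ties broken arbitrarily) and let $C_{ab}=\{c_1,\dots,c_{2f-1}\}$.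 The graph $G=(S,E)$ has edge set $E=E'\cup\{\{a,c\},\{c,b\}:\{a,b\}\in E',\ c\in C_{ab}\}$. *)

From HB Require Import structures.
From mathcomp Require Import all_boot all_order all_algebra.
From mathcomp Require Import boolp classical_sets reals constructive_ereal ereal.
Set Implicit Arguments. Unset Strict Implicit. Unset Printing Implicit Defensive.
Import Order.TTheory GRing.Theory Num.Theory.
Local Open Scope ring_scope.

Section Defs.
Variables (R : realType) (T : finType).

Definition is_metric (d : T -> T -> R) : Prop :=
  [/\ forall x y, d x y = 0 <-> x = y,
      forall x y, d x y = d y x,
      forall x y, 0 <= d x y
    & forall x y z, d x z <= d x y + d y z].

(* A graph on vertex set T is given by its edge set: a set of 2-element
   subsets {p,q} of T; edge {p,q} has weight d p q. *)
Definition simple_edges (E : {set {set T}}) : Prop :=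
  forall e, e \in E -> #|e| = 2%N.

Definition complete_edges : {set {set T}} := [set e : {set T} | #|e| == 2%N].

(* walks: p :: s is a walk in E ending at last p s *)
Definition is_walk (E : {set {set T}}) (p : T) (s : seq T) : bool :=
  path (fun x y => [set x; y] \in E) p s.

Fixpoint walk_len (d : T -> T -> R) (p : T) (s : seq T) : R :=
  if s is x :: s' then d p x + walk_len d x s' else 0.

(* delta_X(p,q): length of a shortest path, +oo if none *)
Definition sp_dist (d : T -> T -> R) (E : {set {set T}}) (p q : T) : \bar R :=
  ereal_inf [set (walk_len d p s)%:E | s in
               [set s : seq T | is_walk E p s && (last p s == q)]]%classic.

Definition is_t_spanner (d : T -> T -> R) (t : R) (E : {set {set T}}) : Prop :=
  forall p q, (sp_dist d E p q <= (t * d p q)%:E)%E.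

Definition max_deg_le (F : {set {set T}}) (f : nat) : Prop :=
  forall v, (#|[set e in F | v \in e]| <= f)%N.

Definition is_fault_degree_spanner (d : T -> T -> R) (f : nat) (t : R)
    (E : {set {set T}}) : Prop :=
  forall F : {set {set T}}, F \subset E -> max_deg_le F f ->
    forall p q,
      (sp_dist d (E :\: F) p q <= t%:E * sp_dist d (complete_edges :\: F) p q)%E.

(* [ord e] is, for each edge e = {a,b} of E', a listing c_1,...,c_{n-2} of
   S \ {a,b} in non-decreasing order of |ac|+|cb| (ties broken arbitrarily). *)
Definition valid_orders (d : T -> T -> R) (E' : {set {set T}})
    (ord : {set T} -> seq T) : Prop :=
  forall a b, a != b -> [set a; b] \in E' ->
    perm_eq (ord [set a; b]) (enum (~: [set a; b])) /\
    sorted (fun x y => d a x + d x b <= d a y + d y b) (ord [set a; b]).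

Definition C_set (ord : {set T} -> seq T) (f : nat) (e : {set T}) : {set T} :=
  [set c in take (2 * f - 1) (ord e)].

Definition fd_construction (E' : {set {set T}}) (ord : {set T} -> seq T)
    (f : nat) : {set {set T}} :=
  E' :|: [set e : {set T} | [exists a : T, exists b : T, exists c : T,
            [&& a != b, [set a; b] \in E', c \in C_set ord f [set a; b]
              & (e == [set a; c]) || (e == [set c; b])]]].

End Defs.

From HB Require Import structures.
From mathcomp Require Import all_boot all_order all_algebra.
From mathcomp Require Import boolp classical_sets reals constructive_ereal ereal.
From mathcomp Require Import zify lra.
From mathcomp Require Import fintype finset.
Import Order.TTheory GRing.Theory Num.Theory.
Local Open Scope ring_scope.
Set Implicit Arguments. Unset Strict Implicit.

(* For a faulty edge ab of G',
   call z blocked if az or zb is faulty; at most 2f - 2 vertices are blocked,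
   fewer than the 2f - 1 vertices of C_ab, so some c in C_ab is unblocked, and as
   C_ab lists the cheapest two-edge detours, |ac| + |cb| <= |az| + |zb| for every
   unblocked z.  Among any 2f + 1 vertices one is unblocked and differs from a, b.
   Now follow a simple t-spanner path x = v_0, ..., v_k = y of G' for a pair
   {x,y} not in F and detour around each faulty edge v_m v_(m+1).  If k >= 2f,
   take z among the path vertices within 2f steps of the edge: the detour costs
   at most twice the length of that window, and every edge lies in at most
   4f - 1 windows.  If k < 2f, take z among x, y and C_(x v_1): the detour costs
   at most 4 times the path length.  Either way G \ F has an x-y path of length
   at most (8f + 2) t |xy|, and a shortest path of K_S \ F is then replaced edge
   by edge.  Each edge of G' contributes at most 2(2f - 1) new edges. *)

Lemma count_window_le N a b : (\sum_(m < N) ((a <= m) && (m < b) : nat) <= b - a)%N.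
Proof.
suff : (\sum_(m < N) ((a <= m) && (m < b) : nat) <= minn N b - a)%N.
  by move/leq_trans; apply; rewrite leq_sub2r // geq_minr.
elim: N => [|N IHN]; first by rewrite big_ord0.
rewrite big_ord_recr /=; case: andP => [[aN Nb]|_] /=; move: IHN; set S := (\sum_(_ < N) _); lia.
Qed.

Lemma sum_windows_le (R : numDomainType) (w : nat -> R) k h :
  (forall l, 0 <= w l) ->
  \sum_(m < k) \sum_(m.+1 - h <= l < minn k (m + h)) w l
    <= (2 * h - 1)%:R * \sum_(l < k) w l.
Proof.
move=> w_ge0.
have window_mkcond m : \sum_(m.+1 - h <= l < minn k (m + h)) w l =
    \sum_(l < k) if (m.+1 - h <= l < minn k (m + h))%N then w l else 0.
  rewrite (big_nat_widenl _ 0) // (big_nat_widen 0 _ k) ?geq_minl //.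
  by rewrite big_mkcond big_mkord; apply: eq_bigr => l _; rewrite andbC.
under eq_bigr => m _ do rewrite window_mkcond.
rewrite exchange_big mulr_sumr /=.
apply: ler_sum => l _.
apply: (@le_trans _ _ (\sum_(m < k) (((l.+1 - h <= m) && (m < l + h))%N : nat)%:R * w l)).
  apply: ler_sum => m _; case: ifP => [/andP [lo_l l_hi]|_]; last first.
    by rewrite mulr_ge0.
  suff -> : ((l.+1 - h <= m) && (m < l + h))%N by rewrite mul1r.
  by move: lo_l l_hi; rewrite leq_min; lia.
rewrite -mulr_suml -natr_sum ler_wpM2r // ler_nat.
by apply: leq_trans (count_window_le _ _ _) _; lia.
Qed.

Section Spanners.
Variables (R : realType) (T : finType) (d : T -> T -> R).
Hypothesis d_metric : is_metric d.
Implicit Types (E : {set {set T}}) (p q : T) (s : seq T).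

Lemma dist_ge0 x y : 0 <= d x y. Proof. by case: d_metric. Qed.
Lemma dist_sym x y : d x y = d y x. Proof. by case: d_metric. Qed.
Lemma dist_triangle x y z : d x z <= d x y + d y z. Proof. by case: d_metric. Qed.
Lemma dist_xx x : d x x = 0. Proof. by case: d_metric => dP _ _ _; apply/dP. Qed.

Lemma walk_len_ge0 p s : 0 <= walk_len d p s.
Proof. by elim: s p => [|v s IHs] p //=; rewrite addr_ge0 ?dist_ge0. Qed.

Lemma walk_len_cat p s1 s2 :
  walk_len d p (s1 ++ s2) = walk_len d p s1 + walk_len d (last p s1) s2.
Proof. by elim: s1 p => [|v s IHs] p /=; rewrite ?add0r // IHs addrA. Qed.

Lemma sp_dist_ge0 E p q : (0 <= sp_dist d E p q)%E.
Proof. by apply/ereal_infP => _ [s _ <-]; rewrite lee_fin walk_len_ge0. Qed.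

Lemma sp_dist_le_walk E p s :
  is_walk E p s -> (sp_dist d E p (last p s) <= (walk_len d p s)%:E)%E.
Proof. by move=> ws; apply: ereal_inf_lbound; exists s; rewrite //= ws eqxx. Qed.

Lemma sp_dist_ltP E p q (r : R) : (sp_dist d E p q < r%:E)%E ->
  exists s, [/\ is_walk E p s, last p s = q & walk_len d p s < r].
Proof.
by move=> /ereal_inf_lt [_ [s /= /andP [ws /eqP ls] <-]]; rewrite lte_fin; exists s.
Qed.

Lemma sp_dist_edge E u v : [set u; v] \in E -> (sp_dist d E u v <= (d u v)%:E)%E.
Proof.
move=> uvE; have := @sp_dist_le_walk E u [:: v]; rewrite /= addr0; apply.
by rewrite /is_walk /= uvE.
Qed.

Lemma sp_dist_triangle E p q r :
  (sp_dist d E p r <= sp_dist d E p q + sp_dist d E q r)%E.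
Proof.
have := sp_dist_ge0 E p q; have := sp_dist_ge0 E q r.
case Epq: (sp_dist d E p q) => [a| |] //; case Eqr: (sp_dist d E q r) => [b| |] //;
  rewrite ?addey ?addye ?leey // => _ _.
apply/lee_addgt0Pr => e e_gt0; rewrite -!EFinD.
have [s1 [w1 l1 lt1]] : exists s1, [/\ is_walk E p s1, last p s1 = q
    & walk_len d p s1 < a + e / 2].
  by apply: sp_dist_ltP; rewrite Epq lte_fin; lra.
have [s2 [w2 l2 lt2]] : exists s2, [/\ is_walk E q s2, last q s2 = r
    & walk_len d q s2 < b + e / 2].
  by apply: sp_dist_ltP; rewrite Eqr lte_fin; lra.
have w12 : is_walk E p (s1 ++ s2) by rewrite /is_walk cat_path; apply/andP; rewrite l1.
have := sp_dist_le_walk w12; rewrite last_cat l1 l2 => /le_trans; apply.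
rewrite lee_fin walk_len_cat l1; lra.
Qed.

Definition vtx (p : T) (s : seq T) (j : nat) : T := nth p (p :: s) j.

Lemma vtx_cons p v s m : (m <= size s)%N -> vtx p (v :: s) m.+1 = vtx v s m.
Proof. by move=> ms; rewrite /vtx /= (set_nth_default v p). Qed.

Lemma walk_len_sum p s :
  walk_len d p s = \sum_(m < size s) d (vtx p s m) (vtx p s m.+1).
Proof.
elim: s p => [|v s IHs] p /=; first by rewrite big_ord0.
rewrite big_ord_recl IHs; congr (_ + _); apply: eq_bigr => m _.
by rewrite /bump /= !vtx_cons // ltnW.
Qed.

Lemma sp_dist_le_sum E p s (c : nat -> R) :
  (forall m, (m < size s)%N ->
     (sp_dist d E (vtx p s m) (vtx p s m.+1) <= (c m)%:E)%E) ->
  (sp_dist d E p (last p s) <= (\sum_(m < size s) c m)%:E)%E.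
Proof.
elim: s p c => [|v s IHs] p c cP /=.
  by rewrite big_ord0; exact: (@sp_dist_le_walk E p [::]).
apply: le_trans (sp_dist_triangle _ _ v _) _.
rewrite big_ord_recl EFinD; apply: leeD; first exact: (cP 0%N).
apply: (IHs v (fun m => c m.+1)) => m ms.
by have := cP m.+1 ms; rewrite !vtx_cons // ltnW.
Qed.

Lemma sp_dist_transfer E1 E2 (c : R) p q : 0 < c ->
  (forall s, is_walk E1 p s -> last p s = q ->
     (sp_dist d E2 p q <= (c * walk_len d p s)%:E)%E) ->
  (sp_dist d E2 p q <= c%:E * sp_dist d E1 p q)%E.
Proof.
move=> c_gt0 transfer; rewrite /sp_dist -ereal_inf_pZl //.
apply/ereal_infP => _ [_ [s /= /andP [ws /eqP ls] <-] <-].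
by rewrite -EFinM; exact: transfer.
Qed.

Lemma walk_shorten E x s : is_walk E x s -> exists s',
  [/\ is_walk E x s', last x s' = last x s, uniq (x :: s')
    & walk_len d x s' <= walk_len d x s].
Proof.
elim: s x => [|v s IHs] x /=; first by exists [::].
rewrite /is_walk /= => /andP [xvE ws].
have [s' [ws' ls' us' len_s']] := IHs v ws.
have len_vs' : walk_len d v s' <= d x v + walk_len d v s.
  by apply: le_trans len_s' _; rewrite lerDr dist_ge0.
have [xv|xv] := eqVneq x v; first by subst v; exists s'.
have [xs'|xs'] := boolP (x \in s'); last first.
  exists (v :: s'); split => //=.
  - by rewrite /is_walk /= xvE.
  - by rewrite inE negb_or xv xs'.
  - by rewrite lerD2l.
case/splitPr: xs' ws' ls' us' len_vs' => s1 s2.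
rewrite /is_walk cat_path /= => /and3P [_ _ ws2] ls' us' len_vs'.
exists s2; split => //; first by rewrite -ls' last_cat.
  by move: us' => /andP [_]; rewrite cat_uniq => /and3P [_ _].
apply: le_trans len_vs'; rewrite walk_len_cat /=.
have := walk_len_ge0 v s1; have := dist_ge0 (last v s1) x; lra.
Qed.

Lemma dist_vtx_le_sum p s i j lo hi : (lo <= i <= hi)%N -> (lo <= j <= hi)%N ->
  (hi <= size s)%N ->
  d (vtx p s i) (vtx p s j) <= \sum_(lo <= l < hi) d (vtx p s l) (vtx p s l.+1).
Proof.
wlog le_ij : i j / (i <= j)%N.
  move=> wlog_ij Hi Hj Hhi; have [le_ij|/ltnW le_ji] := leqP i j; first exact: wlog_ij.
  by rewrite dist_sym; exact: wlog_ij.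
move=> /andP [lo_i _] /andP [_ j_hi] _.
rewrite (@big_cat_nat _ _ _ i lo hi) ?(leq_trans le_ij) //=.
rewrite (@big_cat_nat _ _ _ j i hi) //=.
have sum_ge0 a b : 0 <= \sum_(a <= l < b) d (vtx p s l) (vtx p s l.+1).
  by rewrite sumr_ge0 // => l _; rewrite dist_ge0.
suff : d (vtx p s i) (vtx p s j) <= \sum_(i <= l < j) d (vtx p s l) (vtx p s l.+1).
  by have := sum_ge0 lo i; have := sum_ge0 j hi; lra.
elim: j le_ij {j_hi} => [|j IHj]; first by rewrite leqn0 => /eqP ->; rewrite dist_xx big_geq.
rewrite leq_eqVlt => /orP [/eqP ->|lt_ij]; first by rewrite dist_xx big_geq.
rewrite big_nat_recr //=; apply: le_trans (dist_triangle _ (vtx p s j) _) _.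
by rewrite lerD2r IHj.
Qed.

Section Construction.
Variables (E' : {set {set T}}) (f : nat) (ord : {set T} -> seq T).
Hypotheses (f_gt0 : (0 < f)%N) (card_T : (2 * f + 1 <= #|T|)%N)
  (ord_ok : valid_orders d E' ord).

Local Notation E := (fd_construction E' ord f).
Local Notation C a b := (C_set ord f [set a; b]).

Lemma ord_spec a b : a != b -> [set a; b] \in E' ->
  [/\ uniq (ord [set a; b]), size (ord [set a; b]) = (#|T| - 2)%N
    & forall c, (c \in ord [set a; b]) = (c != a) && (c != b)].
Proof.
move=> ab abE; have [ord_perm _] := ord_ok ab abE; split.
- by rewrite (perm_uniq ord_perm) enum_uniq.
- rewrite (perm_size ord_perm) -cardE.
  by have := cardsC [set a; b]; rewrite cards2 ab; lia.
- by move=> c; rewrite (perm_mem ord_perm) mem_enum !inE negb_or.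
Qed.

Lemma size_C_prefix a b : a != b -> [set a; b] \in E' ->
  size (take (2 * f - 1) (ord [set a; b])) = (2 * f - 1)%N.
Proof.
move=> ab abE; have [_ ord_size _] := ord_spec ab abE.
by rewrite size_take ord_size; case: ifP => //; lia.
Qed.

Lemma card_C_set a b : a != b -> [set a; b] \in E' -> #|C a b| = (2 * f - 1)%N.
Proof.
move=> ab abE; have [ord_uniq _ _] := ord_spec ab abE.
rewrite /C_set cardsE; move/card_uniqP: (take_uniq (2 * f - 1) ord_uniq) => ->.
exact: size_C_prefix.
Qed.

Lemma C_set_neq a b c : a != b -> [set a; b] \in E' ->
  c \in C a b -> (c != a) && (c != b).
Proof.
move=> ab abE; rewrite inE => /mem_take.
by have [_ _ ->] := ord_spec ab abE.
Qed.

Lemma C_set_edges a b c : a != b -> [set a; b] \in E' -> c \in C a b ->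
  [set a; c] \in E /\ [set c; b] \in E.
Proof.
move=> ab abE cC; split; rewrite !inE; apply/orP; right;
  apply/existsP; exists a; apply/existsP; exists b; apply/existsP; exists c;
  by rewrite ab abE cC eqxx ?orbT.
Qed.

Lemma base_sub_fd : E' \subset E.
Proof. by apply/subsetP => e eE; rewrite inE eE. Qed.

(* [C a b] is a prefix of a listing sorted by [d a _ + d _ b]. *)
Lemma C_set_cost_le a b c z : a != b -> [set a; b] \in E' ->
  c \in C a b -> z != a -> z != b -> z \notin C a b ->
  d a c + d c b <= d a z + d z b.
Proof.
move=> ab abE cC za zb zC; have [_ ord_sorted] := ord_ok ab abE.
have [_ _ ord_mem] := ord_spec ab abE.
set s := ord [set a; b] in ord_sorted ord_mem cC zC *.
have zs : z \in s by rewrite ord_mem za zb.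
have cs : c \in s by move: cC; rewrite inE => /mem_take.
rewrite !inE !in_take // -leqNgt in cC zC.
have le_cost_trans : transitive (fun x y => d a x + d x b <= d a y + d y b).
  by move=> y x w /le_trans; apply.
have := sorted_leq_nth le_cost_trans (fun=> lexx _) z ord_sorted.
move=> /(_ (index c s) (index z s)); rewrite !inE !index_mem !nth_index //.
by apply=> //; apply: ltnW (leq_trans cC zC).
Qed.

Lemma sp_dist_base_edge (F : {set {set T}}) a b : [set a; b] \in E' -> [set a; b] \notin F ->
  (sp_dist d (E :\: F) a b <= (d a b)%:E)%E.
Proof.
move=> abE abF; apply: sp_dist_edge.
by rewrite in_setD abF (subsetP base_sub_fd).
Qed.

Section Faults.
Variable F : {set {set T}}.
Hypothesis F_deg : max_deg_le F f.

Definition blocked a b z := ([set a; z] \in F) || ([set z; b] \in F).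

Lemma card_faulty_nbrs a b : a != b -> [set a; b] \in F ->
  (#|[set z | (z != a) && (z != b) && ([set a; z] \in F)]| <= f - 1)%N.
Proof.
move=> ab abF; set N := [set z | _].
have inj : {in N &, injective (fun z => [set a; z])}.
  move=> z1 z2; rewrite !inE => /andP [/andP [z1a _] _] _ eq12.
  have : z1 \in [set a; z2] by rewrite -eq12 set22.
  by rewrite !inE (negbTE z1a) => /eqP.
have sub : [set [set a; z] | z in N] \subset [set e in F | a \in e] :\ [set a; b].
  apply/subsetP => e /imsetP [z]; rewrite !inE => /andP [/andP [za zb] azF] ->.
  rewrite azF set21 /= andbT; apply: contra zb => /eqP eq_azb.
  have : z \in [set a; b] by rewrite -eq_azb set22.
  by rewrite !inE (negbTE za).
rewrite -(card_in_imset inj); apply: leq_trans (subset_leq_card sub) _.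
have abFa : [set a; b] \in [set e in F | a \in e] by rewrite inE abF set21.
have := F_deg a; rewrite (cardsD1 [set a; b] [set e in F | a \in e]) abFa add1n.
by move=> /(leq_sub2r 1); rewrite subn1.
Qed.

Definition blockers a b : {set T} := [set z | (z != a) && (z != b) && blocked a b z].

Lemma card_blockers a b : a != b -> [set a; b] \in F -> (#|blockers a b| <= 2 * f - 2)%N.
Proof.
move=> ab abF.
have sub : blockers a b \subset
    [set z | (z != a) && (z != b) && ([set a; z] \in F)] :|:
    [set z | (z != b) && (z != a) && ([set b; z] \in F)].
  apply/subsetP => z; rewrite /blockers !inE /blocked [[set z; b]]setUC.
  by case: (z != a); case: (z != b).
have ba : b != a by rewrite eq_sym.
have baF : [set b; a] \in F by rewrite setUC.
apply: leq_trans (subset_leq_card sub) _; apply: leq_trans (leq_card_setU _ _) _.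
by have := card_faulty_nbrs ab abF; have := card_faulty_nbrs ba baF; lia.
Qed.

Lemma exists_unblocked a b (X : {set T}) : a != b -> [set a; b] \in F ->
  (2 * f < #|X|)%N -> exists z, [/\ z \in X, z != a, z != b & ~~ blocked a b z].
Proof.
move=> ab abF X_big.
have [z zX] : exists2 z, z \in X & z \notin blockers a b :|: [set a; b].
  apply/subsetPn; apply: contraTN X_big => /subset_leq_card X_B; rewrite -leqNgt.
  apply: leq_trans X_B _; apply: leq_trans (leq_card_setU _ _) _.
  by have := card_blockers ab abF; rewrite cards2 ab; lia.
rewrite /blockers !inE !negb_or => /andP [z_ok /andP [za zb]].
by exists z; split => //; move: z_ok; rewrite za zb.
Qed.

Lemma exists_unblocked_C a b : a != b -> [set a; b] \in E' -> [set a; b] \in F ->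
  exists2 c, c \in C a b & ~~ blocked a b c.
Proof.
move=> ab abE abF.
have : ~~ (C a b \subset blockers a b).
  apply/negP => /subset_leq_card; rewrite card_C_set //.
  by have := card_blockers ab abF; lia.
case/subsetPn => c cC; rewrite /blockers inE (C_set_neq ab abE cC) /= => c_ok.
by exists c.
Qed.

Lemma sp_dist_via a b c : a != b -> [set a; b] \in E' -> c \in C a b ->
  ~~ blocked a b c -> (sp_dist d (E :\: F) a b <= (d a c + d c b)%:E)%E.
Proof.
move=> ab abE cC; rewrite /blocked negb_or => /andP [acF cbF].
have [acE cbE] := C_set_edges ab abE cC.
apply: le_trans (sp_dist_triangle _ _ c _) _; rewrite EFinD.
by apply: leeD; apply: sp_dist_edge; rewrite in_setD ?acF ?acE ?cbF ?cbE.
Qed.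

Lemma sp_dist_detour a b z : a != b -> [set a; b] \in E' -> [set a; b] \in F ->
  z != a -> z != b -> ~~ blocked a b z ->
  (sp_dist d (E :\: F) a b <= (d a z + d z b)%:E)%E.
Proof.
move=> ab abE abF za zb z_ok.
have [zC|zC] := boolP (z \in C a b); first exact: sp_dist_via.
have [c cC c_ok] := exists_unblocked_C ab abE abF.
apply: le_trans (sp_dist_via ab abE cC c_ok) _.
by rewrite lee_fin (C_set_cost_le ab abE cC za zb zC).
Qed.

Section UniqueWalk.
Variables (x y : T) (s : seq T).
Hypotheses (xy : x != y) (xyE : [set x; y] \notin E)
  (ws : is_walk E' x s) (us : uniq (x :: s)) (ls : last x s = y).

Local Notation v := (vtx x s).
Local Notation k := (size s).
Local Notation L := (walk_len d x s).

Lemma vtx_last : v k = y.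
Proof. by rewrite /vtx -last_nth. Qed.

Lemma vtx_edge m : (m < k)%N -> [set v m; v m.+1] \in E'.
Proof. by move=> mk; move/(pathP x): ws => /(_ m mk). Qed.

Lemma vtx_inj i j : (i <= k)%N -> (j <= k)%N -> v i = v j -> i = j.
Proof. by move=> ik jk /eqP; rewrite nth_uniq // => /eqP. Qed.

Lemma vtx_neq m : (m < k)%N -> v m != v m.+1.
Proof. by move=> mk; apply/eqP => /vtx_inj; rewrite ltnW // => /(_ isT mk) /n_Sn. Qed.

Lemma size_walk_ge2 : (2 <= k)%N.
Proof.
rewrite ltnNge; apply/negP => k_le1.
have [k0|k1] : k = 0%N \/ k = 1%N by move: k_le1; case: k => [|[|]] // _; [left|right].
  by move: xy; rewrite -vtx_last k0 /vtx /= eqxx.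
move: xyE; rewrite -vtx_last k1 => /negP; apply; apply: (subsetP base_sub_fd).
by apply: (@vtx_edge 0); rewrite k1.
Qed.

Lemma dist_vtx_le_len i j : (i <= k)%N -> (j <= k)%N -> d (v i) (v j) <= L.
Proof.
move=> ik jk; rewrite walk_len_sum.
by have := @dist_vtx_le_sum x s i j 0 k; rewrite big_mkord ik jk; apply.
Qed.

Definition window_len m := \sum_(m.+1 - 2 * f <= l < minn k (m + 2 * f)) d (v l) (v l.+1).

(* A window of at least [2f + 1] consecutive vertices of the walk around the
   faulty edge contains a vertex that is not blocked. *)
Lemma sp_dist_faulty_le_window m : (2 * f <= k)%N -> (m < k)%N -> [set v m; v m.+1] \in F ->
  (sp_dist d (E :\: F) (v m) (v m.+1) <= (2 * window_len m)%:E)%E.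
Proof.
move=> fk mk abF; set lo := (m.+1 - 2 * f)%N; set hi := minn k (m + 2 * f).
set X := [set z in map v (iota lo (hi.+1 - lo))].
have uniq_X : uniq (map v (iota lo (hi.+1 - lo))).
  rewrite map_inj_in_uniq ?iota_uniq // => i j; rewrite !mem_iota => i_win j_win.
  by apply: vtx_inj; move: i_win j_win; rewrite /lo /hi; lia.
have card_X : #|X| = (hi.+1 - lo)%N.
  by rewrite cardsE; move/card_uniqP: uniq_X => ->; rewrite size_map size_iota.
have X_big : (2 * f < #|X|)%N by rewrite card_X /lo /hi; lia.
have [z [zX za zb z_ok]] := exists_unblocked (vtx_neq mk) abF X_big.
apply: le_trans (sp_dist_detour (vtx_neq mk) (vtx_edge mk) abF za zb z_ok) _.
have lo_m : (lo <= m)%N by rewrite leq_subLR addnC -addn1 leq_add2l muln_gt0 f_gt0.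
have m_hi : (m < hi)%N by rewrite leq_min mk -addn1 leq_add2l muln_gt0 f_gt0.
have lo_hi : (lo <= hi.+1)%N by rewrite ltnW // ltnS (leq_trans lo_m) // ltnW.
move: zX; rewrite inE => /mapP [j]; rewrite mem_iota subnKC // ltnS => /andP [lo_j j_hi] ->.
have win i : (lo <= i <= hi)%N -> d (v i) (v j) <= window_len m.
  by move=> i_win; apply: dist_vtx_le_sum; rewrite ?i_win ?lo_j ?j_hi ?geq_minl.
have := win m; have := win m.+1; rewrite lo_m m_hi (ltnW m_hi) (leq_trans lo_m) //.
by rewrite (dist_sym (v j)) lee_fin => h1 h2; lra.
Qed.

(* Besides [x] and [y], the [2f - 1] vertices [c] of [C x (v 1)] are candidates:
   [x c v_1] is no longer than [x y v_1]. *)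
Lemma sp_dist_faulty_le_len m : (m < k)%N -> [set v m; v m.+1] \in F ->
  (sp_dist d (E :\: F) (v m) (v m.+1) <= (4 * L)%:E)%E.
Proof.
move=> mk abF; have k_ge2 := size_walk_ge2.
have x1 : x != v 1 by apply/eqP => /(vtx_inj (leq0n k) (ltnW k_ge2)).
have y1 : y != v 1.
  by rewrite -vtx_last; apply/eqP => /(vtx_inj (leqnn k) (ltnW k_ge2)) k1; rewrite k1 in k_ge2.
have x1E : [set x; v 1] \in E' := vtx_edge (ltnW k_ge2).
set C1 := C x (v 1).
have yC1 : y \notin C1.
  by apply: contra xyE => yC1; have [] := C_set_edges x1 x1E yC1.
have xC1 : x \notin C1 by apply/negP => /(C_set_neq x1 x1E); rewrite eqxx.
have X_big : (2 * f < #|x |: (y |: C1)|)%N.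
  rewrite !cardsU1 in_setU1 (negbTE xy) (negbTE xC1) yC1 card_C_set //=.
  by rewrite !add1n subn1 prednK // muln_gt0 f_gt0.
have [z [zX za zb z_ok]] := exists_unblocked (vtx_neq mk) abF X_big.
have via_z : d x z + d z (v 1) <= d x y + d y (v 1).
  move: zX; rewrite !in_setU1 => /or3P [/eqP -> | /eqP -> | zC1] //.
  - by rewrite dist_xx add0r dist_triangle.
  - by apply: C_set_cost_le; rewrite // eq_sym.
apply: le_trans (sp_dist_detour (vtx_neq mk) (vtx_edge mk) abF za zb z_ok) _.
have ax : d (v m) x <= L := dist_vtx_le_len (ltnW mk) (leq0n k).
have xy_L : d x y <= L by rewrite -vtx_last; apply: (@dist_vtx_le_len 0 k).
have y1_L : d y (v 1) <= L.
  by rewrite -vtx_last; exact: dist_vtx_le_len (leqnn k) (ltnW k_ge2).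
have b1 : d (v 1) (v m.+1) <= L := dist_vtx_le_len (ltnW k_ge2) mk.
have := dist_triangle (v m) x z; have := dist_triangle z (v 1) (v m.+1).
by rewrite lee_fin; lra.
Qed.

Lemma sp_dist_walk_le : (sp_dist d (E :\: F) x y <= ((8 * f + 2)%:R * L)%:E)%E.
Proof.
have L_ge0 : 0 <= L := walk_len_ge0 x s.
have window_ge0 m : 0 <= window_len m by rewrite sumr_ge0 // => l _; apply: dist_ge0.
pose detour_len m := if (2 * f <= k)%N then 2 * window_len m else 4 * L.
have detour_ge0 m : 0 <= detour_len m.
  by rewrite /detour_len; case: ifP => _; rewrite mulr_ge0.
have edge_le m : (m < k)%N ->
    (sp_dist d (E :\: F) (v m) (v m.+1) <= (d (v m) (v m.+1) + detour_len m)%:E)%E.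
  move=> mk; have := detour_ge0 m; have := dist_ge0 (v m) (v m.+1).
  have [abF|abF] := boolP ([set v m; v m.+1] \in F); last first.
    move=> d_ge0 _; apply: le_trans (sp_dist_base_edge (vtx_edge mk) abF) _.
    by rewrite lee_fin lerDl.
  rewrite /detour_len; case: ifP => fk d_ge0 _.
    by apply: le_trans (sp_dist_faulty_le_window fk mk abF) _; rewrite lee_fin lerDr.
  by apply: le_trans (sp_dist_faulty_le_len mk abF) _; rewrite lee_fin lerDr.
have := sp_dist_le_sum edge_le; rewrite ls => /le_trans; apply.
rewrite lee_fin big_split /= -walk_len_sum /detour_len.
have f_ge1 : 1 <= f%:R :> R by rewrite ler1n.
(* For [k >= 2f] every edge lies in at most [4f - 1] windows; otherwise there
   are at most [2f - 1] detours. *)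
rewrite natrD natrM; case: leqP => fk.
  have := sum_windows_le k (2 * f) (fun l => dist_ge0 (v l) (v l.+1)).
  rewrite -walk_len_sum -mulr_sumr -/(window_len _) natrB ?natrM ?muln_gt0 ?f_gt0 //.
  by lra.
have k_le : (k%:R : R) <= 2 * f%:R - 1.
  have : (k <= 2 * f - 1)%N by rewrite subn1 -ltnS prednK // muln_gt0 f_gt0.
  by rewrite -(ler_nat R) natrB ?natrM // muln_gt0 f_gt0.
rewrite sumr_const card_ord -mulr_natl.
have : k%:R * L <= (2 * f%:R - 1) * L by rewrite ler_wpM2r.
by lra.
Qed.

End UniqueWalk.

Lemma sp_dist_pair_le (t : R) x y : 1 <= t -> is_t_spanner d t E' ->
  x != y -> [set x; y] \notin F ->
  (sp_dist d (E :\: F) x y <= ((8 * f + 2)%:R * t * d x y)%:E)%E.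
Proof.
move=> t_ge1 spanner xy xyF.
have c_ge1 : 1 <= (8 * f + 2)%:R :> R by rewrite ler1n addn2.
have c_ge0 : 0 <= (8 * f + 2)%:R :> R := le_trans ler01 c_ge1.
have [xyE|xyE] := boolP ([set x; y] \in E).
  apply: le_trans (sp_dist_edge _) _; first by rewrite in_setD xyF xyE.
  by rewrite lee_fin ler_peMl ?dist_ge0 ?mulr_ege1.
apply: le_trans (@sp_dist_transfer E' _ (8 * f + 2)%:R _ _ _ _) _.
- exact: lt_le_trans ltr01 c_ge1.
- move=> s ws ls; have [s' [ws' ls' us' len_s']] := walk_shorten ws.
  apply: le_trans (sp_dist_walk_le xy xyE ws' us' _) _; first by rewrite ls' ls.
  by rewrite lee_fin ler_wpM2l.
by rewrite -mulrA EFinM lee_wpmul2l ?lee_fin.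
Qed.

Lemma sp_dist_fault_le (t : R) p q : 1 <= t -> is_t_spanner d t E' ->
  (sp_dist d (E :\: F) p q <=
     ((8 * f + 2)%:R * t)%:E * sp_dist d (@complete_edges T :\: F) p q)%E.
Proof.
move=> t_ge1 spanner; apply: sp_dist_transfer => [|s ws <-].
  by rewrite mulr_gt0 ?(lt_le_trans ltr01 t_ge1) // ltr0n addn2.
rewrite walk_len_sum mulr_sumr.
apply: (sp_dist_le_sum (c := fun m => _ * d (vtx p s m) (vtx p s m.+1))) => m ms.
move/(pathP p): ws => /(_ m ms); rewrite in_setD inE cards2 => /andP [uvF].
move=> card_uv; apply: sp_dist_pair_le => //.
by apply: contraTneq card_uv; rewrite /vtx /= => ->; rewrite eqxx.
Qed.

End Faults.

End Construction.

End Spanners.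

Lemma card_bigcup_le (I U : finType) (A : {set I}) (S : I -> {set U}) :
  (#|\bigcup_(i in A) S i| <= \sum_(i in A) #|S i|)%N.
Proof.
apply: (big_rec2 (fun (X : {set U}) n => #|X| <= n)%N); first by rewrite cards0.
by move=> i X n _ IH; apply: leq_trans (leq_card_setU _ _) _; rewrite leq_add2l.
Qed.

Lemma card_fd_construction (T : finType) (E' : {set {set T}}) (ord : {set T} -> seq T)
    (f : nat) :
  (0 < f)%N -> simple_edges E' ->
  (#|fd_construction E' ord f| <= (4 * f - 1) * #|E'|)%N.
Proof.
move=> f_gt0 simple_E'.
pose spokes (e : {set T}) := [set [set a; c] | a in e, c in C_set ord f e].
have sub : fd_construction E' ord f \subset E' :|: \bigcup_(e in E') spokes e.
  apply/subsetP => g; rewrite inE => /orP [gE|]; first by rewrite inE gE.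
  rewrite inE => /existsP [a /existsP [b /existsP [c /and4P [_ abE cC]]]].
  rewrite inE; case/orP => /eqP ->; apply/orP; right; apply/bigcupP;
    exists [set a; b] => //; apply/imset2P.
    by exists a c; rewrite ?set21.
  by exists b c; rewrite ?set22 // setUC.
have card_spokes e : e \in E' -> (#|spokes e| <= 2 * (2 * f - 1))%N.
  move=> eE; rewrite /spokes curry_imset2X; apply: leq_trans (leq_imset_card _ _) _.
  rewrite cardsX (simple_E' e eE) leq_mul2l /= /C_set cardsE.
  by apply: leq_trans (card_size _) _; rewrite size_take; case: ifP => // /negbT; rewrite -leqNgt.
apply: leq_trans (subset_leq_card sub) _; apply: leq_trans (leq_card_setU _ _) _.
apply: leq_trans (leq_add (leqnn _) (card_bigcup_le _ _)) _.
have sum_spokes : (\sum_(e in E') #|spokes e| <= \sum_(e in E') 2 * (2 * f - 1))%N.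
  exact: leq_sum.
apply: leq_trans (leq_add (leqnn _) sum_spokes) _.
by rewrite sum_nat_const; nia.
Qed.

Theorem theorem2 (R : realType) (T : finType) (d : T -> T -> R) (t : R)
    (E' : {set {set T}}) (f : nat) (ord : {set T} -> seq T) :
  is_metric d -> 1 <= t -> simple_edges E' -> is_t_spanner d t E' ->
  (1 <= f)%N -> (2 * f + 1 <= #|T|)%N ->
  valid_orders d E' ord ->
  is_fault_degree_spanner d f ((8 * f + 2)%:R * t) (fd_construction E' ord f) /\
  (#|fd_construction E' ord f| <= (4 * f - 1) * #|E'|)%N.
Proof.
move=> d_metric t_ge1 simple_E' spanner f_gt0 card_T ord_ok; split.
  move=> F _ F_deg p q.
  exact: (sp_dist_fault_le d_metric f_gt0 card_T ord_ok F_deg p q t_ge1 spanner).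
exact: card_fd_construction.
Qed.
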